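(* Let $m=(i,k,\nu)$ with $i\in\{1,\ldots,N\}$, $k\in\{1,\ldots,n\}$, $\nu\in\{1,2\}$, and let $r>0$. Write $\psi_i^{-1}(\leq r)=\{p\in\mathbb{R}^{nN}\mid\psi_i(p)\leq r\}$. (a) The function $h_\nu\circ\psi_i$ is of class $C^1$, and (i) $h_\nu\circ\psi_i$ is bounded by a multiple of $\psi_i$ on $\psi_i^{-1}(\leq r)$; (ii) $\nabla(h_\nu\circ\psi_i)$ is bounded by a multiple of $\psi_i^{1/2}$ on $\psi_i^{-1}(\leq r)$. (b) The Lie derivative $X_m\psi$ is of class $C^2$, and (i) $X_m\psi$ is bounded by a multiple of $\psi_i^{3/2}$ on $\psi_i^{-1}(\leq r)$; (ii) $\nabla(X_m\psi)$ is bounded by a multiple of $\psi_i$ on $\psi_i^{-1}(\leq r)$; (iii) $\mathrm{D}^2(X_m\psi)$ is bounded by a multiple of $\psi_i^{1/2}$ on $\psi_i^{-1}(\leq r)$.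
   Context: $G=(V,E)$ is an undirected graph with $V=\{1,\ldots,N\}$ and nonempty edge set $E$ of two-element subsets (edges $ij$); $d_{ij}\geq0$ for $ij\in E$. For $p=(p_1,\ldots,p_N)\in\mathbb{R}^{nN}$: $\psi_i(p)=\frac14\sum_{j:\,ij\in E}(\|p_j-p_i\|^2-d_{ij}^2)^2$ and $\psi(p)=\frac14\sum_{ij\in E}(\|p_j-p_i\|^2-d_{ij}^2)^2$. For each $i$, $b_{i,1},\ldots,b_{i,n}$ is an orthonormal basis of $\mathbb{R}^n$; $B_{i,k}:\mathbb{R}^{nN}\to\mathbb{R}^{nN}$ is the constant vector field whose $i$-th block in $\mathbb{R}^n$ is $b_{i,k}$ and other blocks are $0$. $X_m(p):=h_\nu(\psi_i(p))B_{i,k}(p)$ for $m=(i,k,\nu)$, and $X_m\psi(p)=\mathrm{D}\psi(p)X_m(p)$ is the Lie derivative. The functions $h_1,h_2:\mathbb{R}\to\mathbb{R}$ satisfy, for $\nu=1,2$: (i) $h_\nu(y)=0$ for $y\leq 0$; (ii) $h_\nu$ is bounded and of class $C^2$ on $(0,\infty)$; (iii) $h_\nu(y)/y$ remains bounded as $y\downarrow 0$; (iv) $h_\nu'(y)$ remains bounded as $y\downarrow0$; (v) $h_\nu''(y)\,y$ remains bounded as $y\downarrow 0$; (vi) there exist $r',c'>0$ with $h_2'(y)h_1(y)-h_1'(y)h_2(y)\leq -c'y$ for all $y\in(0,r']$. Terminology: for a nonnegative function $b$ and a set $W$, a function $f$ is bounded by a multiple of $b$ on $W$ if there is $c>0$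 with $|f(x)|\leq c\,b(x)$ for all $x\in W$; a vector field $X$ if $\|X(x)\|\leq c\,b(x)$; a bilinear-form-valued map $A$ if $|A(x)(v,w)|\leq c\,b(x)\|v\|\|w\|$ for all $x\in W$ and all $v,w$. *)

From HB Require Import structures.
From mathcomp Require Import all_boot all_order all_algebra.
From mathcomp Require Import all_classical all_reals all_analysis.
Set Implicit Arguments. Unset Strict Implicit. Unset Printing Implicit Defensive.
Import Order.TTheory GRing.Theory Num.Theory.
Import numFieldNormedType.Exports.
Local Open Scope ring_scope.
Local Open Scope classical_set_scope.

(* Points p = (p_1,...,p_N) of R^{nN} are N x n matrices: row i is p_i. *)
Notation config R N n := 'M[R]_(N, n).

Section Defs.
Variables (R : realType) (N n : nat).

Definition sqdist (p : config R N n) (i j : 'I_N) : R :=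
  \sum_(l < n) (p j l - p i l) ^+ 2.

Definition psi_i (E : rel 'I_N) (d : 'I_N -> 'I_N -> R) (i : 'I_N)
    (p : config R N n) : R :=
  4^-1 * \sum_(j < N | E i j) (sqdist p i j - d i j ^+ 2) ^+ 2.

Definition psi (E : rel 'I_N) (d : 'I_N -> 'I_N -> R) (p : config R N n) : R :=
  4^-1 * \sum_(i < N) \sum_(j < N | (i < j)%N && E i j)
           (sqdist p i j - d i j ^+ 2) ^+ 2.

Definition Bfield (i : 'I_N) (b : 'rV[R]_n) : config R N n :=
  \matrix_(j, l) (if j == i then b 0 l else 0).

Definition Xpsi (E : rel 'I_N) (d : 'I_N -> 'I_N -> R) (h : R -> R)
    (i : 'I_N) (b : 'rV[R]_n) (p : config R N n) : R :=
  'd (psi E d) p (h (psi_i E d i p) *: Bfield i b).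
End Defs.

Section Smooth.
Variables (R : realType) (V : normedModType R).

(* class C^1 : differentiable everywhere with continuous differential
   (continuity of x |-> Df(x) tested on each direction; V is finite-dim.) *)
Definition C1 (f : V -> R) : Prop :=
  (forall x, differentiable f x) /\
  (forall v, continuous (fun x => 'd f x v)).

Definition D2 (f : V -> R) (x v w : V) : R := 'd (fun y => 'd f y v) x w.

Definition C2 (f : V -> R) : Prop :=
  (forall x, differentiable f x) /\
  (forall v x, differentiable (fun y => 'd f y v) x) /\
  (forall v w, continuous (fun x => D2 f x v w)).

Definition fun_bdd_mult (f : V -> R) (b : V -> R) (W : set V) : Prop :=
  exists2 c : R, 0 < c & forall x, W x -> `|f x| <= c * b x.
Definition diff_bdd_mult (f : V -> R) (b : V -> R) (W : set V) : Prop :=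
  exists2 c : R, 0 < c & forall x, W x -> forall v, `|'d f x v| <= c * b x * `|v|.
Definition D2_bdd_mult (f : V -> R) (b : V -> R) (W : set V) : Prop :=
  exists2 c : R, 0 < c & forall x, W x -> forall v w,
    `|D2 f x v w| <= c * b x * `|v| * `|w|.
End Smooth.

Section Hyp.
Variable (R : realType).
Definition h_hyp (h : R -> R) : Prop :=
  [/\ (forall y, y <= 0 -> h y = 0),
      (exists M, forall y, `|h y| <= M) /\
      (forall y, 0 < y -> [/\ derivable h y 1, derivable (derive1 h) y 1
                            & {for y, continuous (derive1n 2 h)}]),
      (exists2 d : R, 0 < d & exists M, forall y, 0 < y < d -> `|h y / y| <= M),
      (exists2 d : R, 0 < d & exists M, forall y, 0 < y < d -> `|(derive1 h) y| <= M)
    & (exists2 d : R, 0 < d & exists M, forall y, 0 < y < d -> `|(derive1n 2 h) y * y| <= M)].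

Definition h_hyp6 (h1 h2 : R -> R) : Prop :=
  exists2 r' : R, 0 < r' & exists2 c' : R, 0 < c' &
    forall y, 0 < y <= r' -> (derive1 h2) y * h1 y - (derive1 h1) y * h2 y <= - (c' * y).
End Hyp.

From HB Require Import structures.
From mathcomp Require Import all_boot all_order all_algebra.
From mathcomp Require Import all_classical all_reals all_analysis.
From mathcomp Require Import ring lra.
Import Order.TTheory GRing.Theory Num.Theory.
Import numFieldNormedType.Exports.
Local Open Scope ring_scope.
Local Open Scope classical_set_scope.

(* Write psi_i = 1/4 sum_(j ~ i) e_j^2, with e_j the stress of the edge ij.
   On {psi_i <= r} every e_j is O(psi_i^(1/2)) and the coordinate gaps are
   bounded, so D psi_i = O(psi_i^(1/2)) and D^2 psi_i = O(1).  Since B_(i,k)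
   moves p_i only, D psi(p) B_(i,k) involves only the edges at i: it is
   O(psi_i^(1/2)) with bounded first and second derivatives.  Hypotheses
   (iii)-(v) give h = O(y), h' = O(1) and h'' = O(1/y) on (0, r], and
   X_m psi = h(psi_i) D psi B_(i,k) by linearity, so the chain and product rules
   give the stated orders.  Where psi_i vanishes h need not be differentiable;
   there the candidate derivatives are O(psi_i) or O(psi_i^(1/2)), and a squeeze
   argument shows that they are the true derivatives and are continuous. *)

Section differential_calculus.
Context {R : realType} {V : normedModType R}.
Implicit Types (f g df dg : V -> R) (x : V).

Lemma is_diff_ext {f g df dg x} : is_diff x f df ->
  (forall p, f p = g p) -> (forall v, df v = dg v) -> is_diff x g dg.
Proof. by move=> + /funext fg /funext dfg; rewrite -fg -dfg. Qed.

Lemma is_diff_mul {f g df dg x} : is_diff x f df -> is_diff x g dg ->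
  is_diff x (fun p => f p * g p) (fun v => f x * dg v + g x * df v).
Proof. by move=> fx gx; have fgx := is_diffM fx gx; exact: (is_diff_eq fgx). Qed.

Lemma is_diff_mull (c : R) {f df x} : is_diff x f df ->
  is_diff x (fun p => c * f p) (fun v => c * df v).
Proof. by move=> fx; have cfx := is_diffZ c fx; exact: (is_diff_eq cfx). Qed.

Lemma is_diff_mulr (c : R) {f df x} : is_diff x f df ->
  is_diff x (fun p => f p * c) (fun v => df v * c).
Proof. by move/(is_diff_mull c)/is_diff_ext; apply=> ?; rewrite mulrC. Qed.

Lemma is_diff_sum {I : Type} {s : seq I} {P : pred I} {F dF : I -> V -> R} {x} :
  (forall j, P j -> is_diff x (F j) (dF j)) ->
  is_diff x (fun p => \sum_(j <- s | P j) F j p)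
            (fun v => \sum_(j <- s | P j) dF j v).
Proof.
move=> Fx; elim: s => [|a s IH].
  by apply: is_diff_ext (is_diff_cst 0 x) _ _ => [p|v]; rewrite big_nil.
case Pa: (P a); last by apply: is_diff_ext IH _ _ => [p|v]; rewrite big_cons Pa.
by apply: is_diff_ext (is_diffD (Fx a Pa) IH) _ _ => [p|v]; rewrite big_cons Pa.
Qed.

Lemma is_diff_comp_derivable {h : R -> R} {f df x} :
  derivable h (f x) 1 -> is_diff x f df ->
  is_diff x (fun p => h (f p)) (fun v => derive1 h (f x) * df v).
Proof.
move=> hfx fx; have hd : differentiable h (f x) by apply/derivable1_diffP.
apply: is_diff_ext (is_diff_comp fx (differentiableP hd)) _ _ => // v.
by rewrite /= (deriv1E hfx) /= mulrC.
Qed.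

Lemma is_diff_dominated0 {f g x} {M : R} : is_diff x g 0 -> g x = 0 -> f x = 0 ->
  (\forall y \near x, `|f y| <= M * `|g y|) -> is_diff x f 0.
Proof.
move=> [gd dg0] gx0 fx0 fnear.
have go := diff_locally gd; rewrite dg0 gx0 in go; move/eqaddoP: go => go.
have fo : f \o shift x = cst (f x) + \0 +o_ 0 id.
  apply/eqaddoP => e e0.
  have M1 : 0 < `|M| + 1 by rewrite ltr_wpDl.
  have gnear := go (e / (`|M| + 1)) (divr_gt0 e0 M1).
  move: fnear; rewrite (near_shift 0 x) => fnear.
  near=> y.
  have fy : `|f (y + (x - 0))| <= M * `|g (y + (x - 0))| by near: y.
  have gy : `|(g \o shift x - (cst 0 + 0)) y| <= e / (`|M| + 1) * `|y| by near: y.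
  move: fy gy; rewrite /= fx0 !subr0 addr0 !fctE subr0 => fy gy.
  rewrite subr0 (le_trans fy) //.
  rewrite (le_trans (ler_wpM2r (normr_ge0 _) (ler_norm M))) //.
  rewrite (le_trans (ler_wpM2l (normr_ge0 _) gy)) // mulrA ler_wpM2r // mulrCA.
  by rewrite ler_piMr ?ltW // ltr_pdivrMr // mul1r ltrDl.
have df0 : ('d f x : V -> R) = 0.
  by apply: diff_unique; [exact: cst_continuous | exact: fo].
apply: DiffDef => //; apply/diff_locallyP; rewrite df0; split => //.
exact: cst_continuous.
Unshelve. all: by end_near.
Qed.

End differential_calculus.

Lemma continuous_dominated0 {R : realType} {T : topologicalType} {f g : T -> R}
    {x : T} {M : R} : {for x, continuous g} -> g x = 0 -> f x = 0 ->
  (\forall y \near x, `|f y| <= M * `|g y|) -> {for x, continuous f}.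
Proof.
move=> gc gx0 fx0 fnear; apply/(@cvgrPdist_lt _ _ _ _ (nbhs_filter x)) => e e0.
have M1 : 0 < `|M| + 1 by rewrite ltr_wpDl.
have gnear := @cvgr_dist_lt _ _ _ _ (nbhs_filter x) _ _ gc _ (divr_gt0 e0 M1).
near=> y.
have fy : `|f y| <= M * `|g y| by near: y.
have gy : `|g x - g y| < e / (`|M| + 1) by near: y.
rewrite gx0 sub0r normrN in gy; rewrite fx0 sub0r normrN (le_lt_trans fy) //.
rewrite (le_lt_trans (ler_wpM2r (normr_ge0 _) (ler_norm M))) //.
rewrite (le_lt_trans (ler_wpM2l (normr_ge0 _) (ltW gy))) //.
by rewrite mulrCA gtr_pMr // ltr_pdivrMr // mul1r ltrDl.
Unshelve. all: by end_near.
Qed.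

Lemma continuous_atD {R : realType} {T : topologicalType} {f g : T -> R} {x : T} :
  {for x, continuous f} -> {for x, continuous g} ->
  {for x, continuous (fun y => f y + g y)}.
Proof. exact: continuousD. Qed.

Lemma continuous_atM {R : realType} {T : topologicalType} {f g : T -> R} {x : T} :
  {for x, continuous f} -> {for x, continuous g} ->
  {for x, continuous (fun y => f y * g y)}.
Proof. exact: continuousM. Qed.

Lemma is_diff_coord {R : realType} {N n : nat} (a : 'I_N) (l : 'I_n)
    (x : 'M[R]_(N, n)) :
  is_diff x (fun p : 'M[R]_(N, n) => p a l) (fun v => v a l).
Proof.
pose g := fun p : 'M[R]_(N, n) => p a l.
have glin : linear g by move=> c u w; rewrite /g !mxE.
pose gL : {linear 'M[R]_(N, n) -> R} :=
  HB.pack g (GRing.isLinear.Build _ _ _ _ _ glin).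
have gc : continuous gL by exact: coord_continuous.
apply: DiffDef; [exact: differentiable_coord | exact: (diff_lin x gc)].
Qed.

Lemma mx_coord_le_norm {R : realType} {m n : nat} (x : 'M[R]_(m, n)) a l :
  `|x a l| <= `|x|.
Proof. by rewrite [leRHS]mx_normrE; apply/bigmax_geP; right; exists (a, l). Qed.

Lemma norm_le_1Dsqr {R : realType} (x : R) : `|x| <= 1 + x ^+ 2.
Proof.
have -> : x ^+ 2 = `|x| ^+ 2 by rewrite -normrX ger0_norm // sqr_ge0.
by have := normr_ge0 x; nra.
Qed.

Lemma norm_le_2sqrt {R : realType} (x y : R) : 0 <= y -> x ^+ 2 <= 4 * y ->
  `|x| <= 2 * Num.sqrt y.
Proof.
move=> y0; have -> : 4 * y = (2 * Num.sqrt y) ^+ 2.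
  by rewrite exprMn sqr_sqrtr // -natrX.
have -> : x ^+ 2 = `|x| ^+ 2 by rewrite -normrX ger0_norm // sqr_ge0.
have := normr_ge0 x; have : 0 <= 2 * Num.sqrt y by rewrite mulr_ge0 ?sqrtr_ge0.
set a := `|x|; set b := 2 * _; nra.
Qed.

Lemma powR32_sqrt {R : realType} (x : R) : 0 <= x -> x `^ (3 / 2) = x * Num.sqrt x.
Proof.
move=> x0; rewrite -powR12_sqrt // -{2}[x]powRr1 // -powRD.
  by congr (_ `^ _); field.
by rewrite gt_eqF // addr_gt0 ?invr_gt0.
Qed.

(** * Domination on a set *)

Section bdd_mult.
Context {R : realType} {X : Type}.
Implicit Types (F G f g : X -> R).

Definition bdd_mult (W : set X) F g :=
  exists2 C, 0 <= C & forall x, W x -> `|F x| <= C * g x.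

Context {W : set X}.

Lemma bdd_multD {F G g} : bdd_mult W F g -> bdd_mult W G g ->
  bdd_mult W (fun x => F x + G x) g.
Proof.
move=> [C1 C10 F1] [C2 C20 G2]; exists (C1 + C2); first exact: addr_ge0.
by move=> x Wx; rewrite mulrDl (le_trans (ler_normD _ _)) // lerD ?F1 ?G2.
Qed.

Lemma bdd_multM {F G f g} : bdd_mult W F f -> bdd_mult W G g ->
  bdd_mult W (fun x => F x * G x) (fun x => f x * g x).
Proof.
move=> [C1 C10 F1] [C2 C20 G2]; exists (C1 * C2); first exact: mulr_ge0.
by move=> x Wx; rewrite normrM mulrACA ler_pM ?F1 ?G2.
Qed.

Lemma bdd_mult_trans {F g g'} {K : R} : 0 <= K ->
  (forall x, W x -> g x <= K * g' x) -> bdd_mult W F g -> bdd_mult W F g'.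
Proof.
move=> K0 gg' [C C0 FC]; exists (C * K); first exact: mulr_ge0.
by move=> x Wx; rewrite (le_trans (FC x Wx)) // -mulrA ler_wpM2l ?gg'.
Qed.

Lemma eq_bdd_mult_bound {F g g'} : (forall x, W x -> g x = g' x) ->
  bdd_mult W F g -> bdd_mult W F g'.
Proof. by move=> gg'; apply: (bdd_mult_trans ler01) => x Wx; rewrite mul1r gg'. Qed.

Lemma eq_bdd_mult {F F' g} : (forall x, W x -> F x = F' x) ->
  bdd_mult W F g -> bdd_mult W F' g.
Proof. by move=> FF' [C C0 FC]; exists C => // x Wx; rewrite -FF' ?FC. Qed.

Lemma bdd_mult0 g : bdd_mult W (fun=> 0) g.
Proof. by exists 0 => // x _; rewrite normr0 mul0r. Qed.

Lemma bdd_mult_cst (c : R) : bdd_mult W (fun=> c) (fun=> 1).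
Proof. by exists `|c| => // x _; rewrite mulr1. Qed.

Lemma bdd_mult_sum {I : Type} {s : seq I} {P : pred I} {F : I -> X -> R} {g} :
  (forall j, P j -> bdd_mult W (F j) g) ->
  bdd_mult W (fun x => \sum_(j <- s | P j) F j x) g.
Proof.
move=> FP; elim: s => [|a s IH].
  by apply: eq_bdd_mult (bdd_mult0 g) => x _; rewrite big_nil.
case Pa: (P a); last by apply: eq_bdd_mult IH => x _; rewrite big_cons Pa.
by apply: eq_bdd_mult (bdd_multD (FP a Pa) IH) => x _; rewrite big_cons Pa.
Qed.

End bdd_mult.

(* A triple (p, v, w) carries a point and two directions, so that bounds on a
   function, its differential and its second differential live on one set. *)
Definition with_dirs {X : Type} (S : set X) := [set t : X * X * X | S t.1.1].

Section with_dirs_bounds.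
Context {R : realType} {V : normedModType R} {S : set V} {b : V -> R}.

Lemma fun_bdd_mult_with_dirs {f : V -> R} : (forall p, 0 <= b p) ->
  bdd_mult (with_dirs S) (fun t => f t.1.1) (fun t => b t.1.1) ->
  fun_bdd_mult f b S.
Proof.
move=> b_ge0 [C C0 fC]; exists (C + 1) => [|p Sp]; first by rewrite ltr_wpDl.
by rewrite (le_trans (fC (p, p, p) Sp)) // ler_wpM2r // lerDl.
Qed.

Lemma diff_bdd_mult_with_dirs {f : V -> R} {Df : V -> V -> R} :
  (forall p, 0 <= b p) -> (forall p v, 'd f p v = Df p v) ->
  bdd_mult (with_dirs S) (fun t => Df t.1.1 t.1.2) (fun t => b t.1.1 * `|t.1.2|) ->
  diff_bdd_mult f b S.
Proof.
move=> b_ge0 dfE [C C0 fC]; exists (C + 1) => [|p Sp v]; first by rewrite ltr_wpDl.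
by rewrite dfE -mulrA (le_trans (fC (p, v, v) Sp)) // ler_wpM2r ?mulr_ge0 // lerDl.
Qed.

Lemma D2_bdd_mult_with_dirs {f : V -> R} {D2f : V -> V -> V -> R} :
  (forall p, 0 <= b p) -> (forall p v w, D2 f p v w = D2f p v w) ->
  bdd_mult (with_dirs S) (fun t => D2f t.1.1 t.1.2 t.2)
    (fun t => b t.1.1 * (`|t.1.2| * `|t.2|)) ->
  D2_bdd_mult f b S.
Proof.
move=> b_ge0 d2fE [C C0 fC]; exists (C + 1) => [|p Sp v w].
  by rewrite ltr_wpDl.
rewrite d2fE -!mulrA (le_trans (fC (p, v, w) Sp)) //.
by rewrite ler_wpM2r ?mulr_ge0 // lerDl.
Qed.

End with_dirs_bounds.

Lemma bdd_mult_comp {R : realType} {X Y : Type} {W : set X} {W' : set Y}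
    (phi : X -> Y) {F g : Y -> R} :
  (forall x, W x -> W' (phi x)) -> bdd_mult W' F g ->
  bdd_mult W (fun x => F (phi x)) (fun x => g (phi x)).
Proof. by move=> WW' [C C0 FC]; exists C => // x /WW' /FC. Qed.

Lemma bounded_oc_near0 {R : realType} {f : R -> R} {e M : R} (r : R) : 0 < e ->
  (forall y, 0 < y < e -> `|f y| <= M) ->
  (forall y, 0 < y -> {for y, continuous f}) ->
  bdd_mult [set y | 0 < y <= r] f (fun=> 1).
Proof.
move=> e0 fM fc; have e20 : 0 < e / 2 by rewrite divr_gt0.
have e2e : e / 2 < e by rewrite ltr_pdivrMr // ltr_pMr // ltr1n.
suff [C fC] : exists C, forall y, 0 < y <= r -> `|f y| <= C.
  by exists `|C| => // y /fC /le_trans; apply; rewrite mulr1 ler_norm.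
have [re|er] := lerP r (e / 2).
  exists M => y /andP[y0 yr]; apply: fM; rewrite y0 /=.
  exact: le_lt_trans yr (le_lt_trans re e2e).
have cn : {within `[e / 2, r], continuous (fun t => `|f t|)}.
  apply: continuous_in_subspaceT => y; rewrite inE /= in_itv /= => /andP[y1 _].
  apply: (@continuous_comp _ _ _ f Num.norm); first exact: fc (lt_le_trans e20 y1).
  exact: norm_continuous.
have [c _ fc_max] := EVT_max (ltW er) cn.
exists (Num.max M `|f c|) => y /andP[y0 yr]; rewrite le_max.
have [ye|ey] := ltP y (e / 2).
  by rewrite fM // y0 (lt_trans ye e2e).
by rewrite fc_max ?orbT // in_itv /= ey yr.
Qed.

(** * Consequences of the hypotheses on h *)

Section h_hyp_theory.
Context {R : realType} {h : R -> R} (hh : h_hyp h).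

Lemma h_hyp_le0 y : y <= 0 -> h y = 0.
Proof. by case: hh => h0 _ _ _ _; exact: h0. Qed.

Let h_hyp_regular y : 0 < y -> [/\ derivable h y 1, derivable (derive1 h) y 1
  & {for y, continuous (derive1n 2 h)}].
Proof. by case: hh => _ [_ hreg] _ _ _; exact: hreg. Qed.

Lemma h_hyp_derivable y : 0 < y -> derivable h y 1.
Proof. by case/h_hyp_regular. Qed.

Lemma h_hyp_derivable1 y : 0 < y -> derivable (derive1 h) y 1.
Proof. by case/h_hyp_regular. Qed.

Lemma h_hyp_continuous y : 0 < y -> {for y, continuous h}.
Proof. by move/h_hyp_derivable/derivable1_diffP/differentiable_continuous. Qed.

Lemma h_hyp_continuous1 y : 0 < y -> {for y, continuous (derive1 h)}.
Proof. by move/h_hyp_derivable1/derivable1_diffP/differentiable_continuous. Qed.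

Lemma h_hyp_continuous2 y : 0 < y -> {for y, continuous (derive1n 2 h)}.
Proof. by case/h_hyp_regular. Qed.

Lemma h_hyp_bdd r : bdd_mult [set y | 0 <= y <= r] h (fun y => y).
Proof.
have [_ _ [e e0 [M hM]] _ _] := hh.
have hyc y : 0 < y -> {for y, continuous (fun t => h t / t)}.
  move=> y0; apply: continuousM; first exact: h_hyp_continuous.
  by apply: continuousV; [rewrite gt_eqF | exact: cvg_id].
have [C C0 hC] := bounded_oc_near0 r e0 hM hyc.
exists C => // y /andP[y0 yr] /=; have [{}y0|y0'] := ltrP 0 y; last first.
  by rewrite h_hyp_le0 // normr0 mulr_ge0.
rewrite -[h y](@divfK _ y) ?gt_eqF // normrM (gtr0_norm y0).
by apply: ler_wpM2r; [exact: ltW | have := hC y; rewrite mulr1 /= y0 yr; apply].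
Qed.

Lemma h_hyp_bdd1 r : bdd_mult [set y | 0 < y <= r] (derive1 h) (fun=> 1).
Proof.
have [_ _ _ [e e0 [M hM]] _] := hh.
exact: bounded_oc_near0 r e0 hM h_hyp_continuous1.
Qed.

Lemma h_hyp_bdd2 r :
  bdd_mult [set y | 0 < y <= r] (fun y => derive1n 2 h y * y) (fun=> 1).
Proof.
have [_ _ _ _ [e e0 [M hM]]] := hh.
apply: bounded_oc_near0 r e0 hM _ => y y0.
by apply: continuousM; [exact: h_hyp_continuous2 | exact: cvg_id].
Qed.

End h_hyp_theory.

(** * Derivatives of psi_i and psi and their growth near psi_i = 0 *)

Section configuration.
Variables (R : realType) (N n : nat) (E : rel 'I_N) (d : 'I_N -> 'I_N -> R).
Local Notation V := 'M[R]_(N, n).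
Implicit Types (p v w u x : V) (a c : 'I_N).

Definition gap a c l p := p c l - p a l.
Definition dsqdist a c p v := \sum_(l < n) 2 * (gap a c l p * gap a c l v).
Definition stress a c p := sqdist p a c - d a c ^+ 2.

Definition Dpsi_i i p v :=
  2^-1 * \sum_(j < N | E i j) stress i j p * dsqdist i j p v.
Definition D2psi_i i p v w := 2^-1 * \sum_(j < N | E i j)
  (dsqdist i j p w * dsqdist i j p v + stress i j p * dsqdist i j w v).

Definition Dpsi p v := 2^-1 * \sum_(a < N) \sum_(c < N | (a < c)%N && E a c)
  stress a c p * dsqdist a c p v.
Definition D2psi p v w := 2^-1 * \sum_(a < N) \sum_(c < N | (a < c)%N && E a c)
  (dsqdist a c p w * dsqdist a c p v + stress a c p * dsqdist a c w v).
Definition D3psi p v w u := 2^-1 * \sum_(a < N) \sum_(c < N | (a < c)%N && E a c)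
  (dsqdist a c u w * dsqdist a c p v + dsqdist a c p w * dsqdist a c u v
   + dsqdist a c p u * dsqdist a c w v).

Lemma is_diff_gap a c l x : is_diff x (gap a c l) (gap a c l).
Proof. exact: is_diffB (is_diff_coord c l x) (is_diff_coord a l x). Qed.

Lemma is_diff_sqdist a c x : is_diff x (fun p => sqdist p a c) (dsqdist a c x).
Proof.
apply: is_diff_ext (is_diff_sum (fun l _ =>
  is_diff_mul (is_diff_gap a c l x) (is_diff_gap a c l x))) _ _ => [p|v].
  by apply: eq_bigr => l _; rewrite expr2.
by apply: eq_bigr => l _; ring.
Qed.

Lemma is_diff_stress a c x : is_diff x (stress a c) (dsqdist a c x).
Proof.
apply: is_diff_ext
  (is_diffB (is_diff_sqdist a c x) (is_diff_cst (d a c ^+ 2) x)) _ _ => // v.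
by rewrite /= subr0.
Qed.

Lemma is_diff_dsqdist a c v x :
  is_diff x (fun p => dsqdist a c p v) (fun w => dsqdist a c w v).
Proof.
exact: is_diff_sum (fun l _ => is_diff_mull 2
  (is_diff_mulr (gap a c l v) (is_diff_gap a c l x))).
Qed.

Lemma is_diff_psi_i i x : is_diff x (psi_i E d i) (Dpsi_i i x).
Proof.
apply: is_diff_ext (is_diff_mull 4^-1 (is_diff_sum (fun j _ =>
  is_diff_mul (is_diff_stress i j x) (is_diff_stress i j x)))) _ _ => [p|v].
  by rewrite /psi_i; congr (_ * _); apply: eq_bigr => j _; rewrite expr2.
rewrite /Dpsi_i (eq_bigr (fun j => 2 * (stress i j x * dsqdist i j x v))).
  by rewrite -mulr_sumr mulrA; congr (_ * _); field.
by move=> j _; ring.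
Qed.

Lemma is_diff_Dpsi_i i v x :
  is_diff x (fun p => Dpsi_i i p v) (D2psi_i i x v).
Proof.
apply: is_diff_ext (is_diff_mull 2^-1 (is_diff_sum (fun j _ =>
  is_diff_mul (is_diff_stress i j x) (is_diff_dsqdist i j v x)))) _ _ => // w.
by rewrite /D2psi_i; congr (_ * _); apply: eq_bigr => j _; ring.
Qed.

Lemma continuous_D2psi_i i v w : continuous (fun p => D2psi_i i p v w).
Proof.
move=> x; suff [df dfx] : exists df, is_diff x (fun p => D2psi_i i p v w) df.
  exact: differentiable_continuous.
eexists; apply: is_diff_mull; apply: is_diff_sum => j _; apply: is_diffD.
  exact: is_diff_mul (is_diff_dsqdist i j w x) (is_diff_dsqdist i j v x).
exact: is_diff_mulr _ (is_diff_stress i j x).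
Qed.

Lemma is_diff_psi x : is_diff x (psi E d) (Dpsi x).
Proof.
apply: is_diff_ext (is_diff_mull 4^-1 (is_diff_sum (fun a _ => is_diff_sum (fun c _ =>
  is_diff_mul (is_diff_stress a c x) (is_diff_stress a c x))))) _ _ => [p|v].
  by rewrite /psi; congr (_ * _); apply: eq_bigr => a _; apply: eq_bigr.
rewrite /Dpsi (eq_bigr (fun a => 2 * \sum_(c < N | (a < c)%N && E a c)
  (stress a c x * dsqdist a c x v))).
  by rewrite -mulr_sumr mulrA; congr (_ * _); field.
by move=> a _; rewrite mulr_sumr; apply: eq_bigr => c _; ring.
Qed.

Lemma is_diff_Dpsi v x : is_diff x (fun p => Dpsi p v) (D2psi x v).
Proof.
apply: is_diff_ext (is_diff_mull 2^-1 (is_diff_sum (fun a _ => is_diff_sum (fun c _ =>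
  is_diff_mul (is_diff_stress a c x) (is_diff_dsqdist a c v x))))) _ _ => // w.
rewrite /D2psi; congr (_ * _); apply: eq_bigr => a _; apply: eq_bigr => c _.
ring.
Qed.

Lemma is_diff_D2psi v w x : is_diff x (fun p => D2psi p v w) (D3psi x v w).
Proof.
apply: is_diff_ext (is_diff_mull 2^-1 (is_diff_sum (fun a _ => is_diff_sum (fun c _ =>
  is_diffD (is_diff_mul (is_diff_dsqdist a c w x) (is_diff_dsqdist a c v x))
           (is_diff_mulr (dsqdist a c w v) (is_diff_stress a c x))))))
  _ _ => // u.
rewrite /D3psi; congr (_ * _); apply: eq_bigr => a _; apply: eq_bigr => c _.
by rewrite addrfctE /=; ring.
Qed.

Variable i : 'I_N.
Local Notation psii := (@psi_i R N n E d i).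

Lemma psi_i_ge0 p : 0 <= psii p.
Proof. by rewrite mulr_ge0 ?invr_ge0 // sumr_ge0 // => j _; rewrite sqr_ge0. Qed.

Lemma sqr_gap_le a c l p : gap a c l p ^+ 2 <= sqdist p a c.
Proof.
by rewrite /sqdist (bigD1 l) //= lerDl; apply: sumr_ge0 => c' _; exact: sqr_ge0.
Qed.

Definition stress_controlled a c := forall p, stress a c p ^+ 2 <= 4 * psii p.

Lemma stress_controlled_edge {j} : E i j -> stress_controlled i j.
Proof.
move=> Eij p; rewrite /psi_i mulrA mulfV ?pnatr_eq0 // mul1r (bigD1 j) //= lerDl.
by apply: sumr_ge0 => c _; exact: sqr_ge0.
Qed.

Local Notation W r := (with_dirs [set p : V | psii p <= r]).

Lemma sqrt_psi_i_le r (t : V * V * V) : W r t -> Num.sqrt (psii t.1.1) <= 1 + r.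
Proof.
have := norm_le_1Dsqr (Num.sqrt (psii t.1.1)).
rewrite ger0_norm ?sqrtr_ge0 // sqr_sqrtr ?psi_i_ge0 // /with_dirs /=; lra.
Qed.

Section psi_i_bounds.
Context {r : R} (r0 : 0 <= r).

Lemma bdd_stress {a c} : stress_controlled a c ->
  bdd_mult (W r) (fun t => stress a c t.1.1) (fun t => Num.sqrt (psii t.1.1)).
Proof.
by move=> ac; exists 2 => // t _; exact: norm_le_2sqrt (psi_i_ge0 _) (ac _).
Qed.

Lemma bdd_gap {a c} l : stress_controlled a c ->
  bdd_mult (W r) (fun t => gap a c l t.1.1) (fun=> 1).
Proof.
move=> ac; exists (2 + 4 * r + d a c ^+ 2).
  by rewrite !addr_ge0 ?sqr_ge0 ?mulr_ge0.
move=> t Wt; rewrite mulr1.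
have := norm_le_1Dsqr (gap a c l t.1.1); have := norm_le_1Dsqr (stress a c t.1.1).
have := sqr_gap_le a c l t.1.1; have := ac t.1.1.
have : sqdist t.1.1 a c = stress a c t.1.1 + d a c ^+ 2 by rewrite /stress subrK.
have := ler_norm (stress a c t.1.1); move: Wt; rewrite /with_dirs /=; lra.
Qed.

Lemma bdd_gap_dir a c l (dir : V * V * V -> V) :
  bdd_mult (W r) (fun t => gap a c l (dir t)) (fun t => `|dir t|).
Proof.
exists 2 => // t _; rewrite /gap (le_trans (ler_normB _ _)) //.
by rewrite mulr2n mulrDl mul1r lerD ?mx_coord_le_norm.
Qed.

Lemma bdd_dsqdist {a c} (dir : V * V * V -> V) : stress_controlled a c ->
  bdd_mult (W r) (fun t => dsqdist a c t.1.1 (dir t)) (fun t => `|dir t|).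
Proof.
move=> ac; apply: bdd_mult_sum => l _.
apply: eq_bdd_mult_bound (bdd_multM (bdd_mult_cst 2)
  (bdd_multM (bdd_gap l ac) (bdd_gap_dir a c l dir))) => t _.
by rewrite !mul1r.
Qed.

Lemma bdd_dsqdist_dirs a c (dir1 dir2 : V * V * V -> V) :
  bdd_mult (W r) (fun t => dsqdist a c (dir1 t) (dir2 t))
    (fun t => `|dir1 t| * `|dir2 t|).
Proof.
apply: bdd_mult_sum => l _.
apply: eq_bdd_mult_bound (bdd_multM (bdd_mult_cst 2)
  (bdd_multM (bdd_gap_dir a c l dir1) (bdd_gap_dir a c l dir2))) => t _.
by rewrite mul1r.
Qed.

Lemma bdd_Dpsi_i (dir : V * V * V -> V) :
  bdd_mult (W r) (fun t => Dpsi_i i t.1.1 (dir t))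
    (fun t => Num.sqrt (psii t.1.1) * `|dir t|).
Proof.
apply: eq_bdd_mult_bound (bdd_multM (bdd_mult_cst _) (bdd_mult_sum (fun j Eij =>
  bdd_multM (bdd_stress (stress_controlled_edge Eij))
    (bdd_dsqdist dir (stress_controlled_edge Eij))))) => t _.
by rewrite mul1r.
Qed.

Lemma bdd_D2psi_i (dir1 dir2 : V * V * V -> V) :
  bdd_mult (W r) (fun t => D2psi_i i t.1.1 (dir1 t) (dir2 t))
    (fun t => `|dir1 t| * `|dir2 t|).
Proof.
apply: (eq_bdd_mult_bound (g := fun t => 1 * (`|dir1 t| * `|dir2 t|))) => [t _|].
  by rewrite mul1r.
apply: bdd_multM; first exact: bdd_mult_cst.
apply: bdd_mult_sum => j /stress_controlled_edge ij; apply: bdd_multD.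
  apply: eq_bdd_mult_bound (bdd_multM (bdd_dsqdist dir2 ij)
    (bdd_dsqdist dir1 ij)) => t _.
  exact: mulrC.
apply: bdd_mult_trans (bdd_multM (bdd_stress ij)
  (bdd_dsqdist_dirs i j dir2 dir1)) => [|t Wt]; first exact: (addr_ge0 ler01 r0).
by rewrite [`|dir2 t| * _]mulrC ler_wpM2r ?mulr_ge0 ?sqrt_psi_i_le.
Qed.

End psi_i_bounds.

Definition incident a c := (a == i) || (c == i).

Hypotheses (Esym : symmetric E) (dsym : forall a c, d a c = d c a).

Lemma stress_controlled_incident a c :
  E a c -> incident a c -> stress_controlled a c.
Proof.
move=> Eac /orP[] /eqP ai; rewrite ai in Eac *; first exact: stress_controlled_edge.
have stressC p : stress a i p = stress i a p.
  by rewrite /stress dsym; congr (_ - _); apply: eq_bigr => l _; ring.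
by move=> p; rewrite stressC; apply: stress_controlled_edge; rewrite Esym.
Qed.

Variable B : V.
Hypothesis B_supp : forall a l, a != i -> B a l = 0.

Lemma dsqdist_B0 a c p : ~~ incident a c -> dsqdist a c p B = 0.
Proof.
rewrite negb_or => /andP[ai ci]; rewrite /dsqdist big1 // => l _.
by rewrite /gap !B_supp // subrr !mulr0.
Qed.

(* Only the edges at i feel a displacement of p_i; the others drop out. *)
Lemma bdd_mult_incident_sum {X : Type} {S : set X} (F : 'I_N -> 'I_N -> X -> R)
    (g : X -> R) :
  (forall a c, stress_controlled a c -> bdd_mult S (F a c) g) ->
  (forall a c t, ~~ incident a c -> F a c t = 0) ->
  bdd_mult S
    (fun t => 2^-1 * \sum_(a < N) \sum_(c < N | (a < c)%N && E a c) F a c t) g.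
Proof.
move=> Fbdd F0; apply: (eq_bdd_mult_bound (g := fun t => 1 * g t)) => [t _|].
  by rewrite mul1r.
apply: bdd_multM; first exact: bdd_mult_cst.
apply: bdd_mult_sum => a _; apply: bdd_mult_sum => c /andP[_ Eac].
have [Iac|nIac] := boolP (incident a c).
  exact/Fbdd/stress_controlled_incident.
by apply: eq_bdd_mult (bdd_mult0 g) => t _; rewrite F0.
Qed.

Section psiB_bounds.
Context {r : R} (r0 : 0 <= r).

Lemma bdd_dsqdist_B a c (dir : V * V * V -> V) :
  bdd_mult (W r) (fun t => dsqdist a c (dir t) B) (fun t => `|dir t|).
Proof.
apply: (bdd_mult_trans (K := `|B|)) (bdd_dsqdist_dirs a c dir (fun=> B)) => // t _.
by rewrite mulrC.
Qed.

Lemma bdd_dsqdist_pos_B {a c} : stress_controlled a c ->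
  bdd_mult (W r) (fun t => dsqdist a c t.1.1 B) (fun=> 1).
Proof.
move=> ac.
apply: (bdd_mult_trans (K := `|B|)) (bdd_dsqdist r0 (fun=> B) ac) => // t _.
by rewrite mulr1.
Qed.

Lemma bdd_DpsiB :
  bdd_mult (W r) (fun t => Dpsi t.1.1 B) (fun t => Num.sqrt (psii t.1.1)).
Proof.
apply: bdd_mult_incident_sum => [a c ac|a c t nIac]; last first.
  by rewrite dsqdist_B0 ?mulr0.
apply: eq_bdd_mult_bound (bdd_multM (bdd_stress ac) (bdd_dsqdist_pos_B ac)).
by move=> t _; rewrite mulr1.
Qed.

Lemma bdd_D2psiB (dir : V * V * V -> V) :
  bdd_mult (W r) (fun t => D2psi t.1.1 B (dir t)) (fun t => `|dir t|).
Proof.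
apply: bdd_mult_incident_sum => [a c ac|a c t nIac]; last first.
  by rewrite !dsqdist_B0 // !mulr0 addr0.
apply: bdd_multD.
  apply: eq_bdd_mult_bound
    (bdd_multM (bdd_dsqdist r0 dir ac) (bdd_dsqdist_pos_B ac)).
  by move=> t _; rewrite mulr1.
apply: bdd_mult_trans (bdd_multM (bdd_stress ac) (bdd_dsqdist_B a c dir)).
  exact: (addr_ge0 ler01 r0).
by move=> t Wt; rewrite ler_wpM2r ?sqrt_psi_i_le.
Qed.

Lemma bdd_D3psiB (dir1 dir2 : V * V * V -> V) :
  bdd_mult (W r) (fun t => D3psi t.1.1 B (dir1 t) (dir2 t))
    (fun t => `|dir1 t| * `|dir2 t|).
Proof.
apply: bdd_mult_incident_sum => [a c ac|a c t nIac]; last first.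
  by rewrite !dsqdist_B0 // !mulr0 !addr0.
apply: bdd_multD; first apply: bdd_multD.
- apply: eq_bdd_mult_bound (bdd_multM (bdd_dsqdist_dirs a c dir2 dir1)
    (bdd_dsqdist_pos_B ac)) => t _.
  by rewrite mulr1 mulrC.
- exact: bdd_multM (bdd_dsqdist r0 dir1 ac) (bdd_dsqdist_B a c dir2).
- apply: eq_bdd_mult_bound (bdd_multM (bdd_dsqdist r0 dir2 ac)
    (bdd_dsqdist_B a c dir1)) => t _.
  exact: mulrC.
Qed.

End psiB_bounds.

Lemma continuous_psi_i : continuous psii.
Proof. by move=> x; case: (is_diff_psi_i i x) => /differentiable_continuous. Qed.

Lemma continuous_Dpsi_i v : continuous (fun p => Dpsi_i i p v).
Proof. by move=> x; case: (is_diff_Dpsi_i i v x) => /differentiable_continuous. Qed.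

Lemma continuous_Dpsi v : continuous (fun p => Dpsi p v).
Proof. by move=> x; case: (is_diff_Dpsi v x) => /differentiable_continuous. Qed.

Lemma continuous_D2psi v w : continuous (fun p => D2psi p v w).
Proof. by move=> x; case: (is_diff_D2psi v w x) => /differentiable_continuous. Qed.

Lemma continuous_D3psi v w u : continuous (fun p => D3psi p v w u).
Proof.
move=> x; suff [df dfx] : exists df, is_diff x (fun p => D3psi p v w u) df.
  exact: differentiable_continuous.
eexists; apply: is_diff_mull; apply: is_diff_sum => a _; apply: is_diff_sum => c _.
apply: is_diffD; first apply: is_diffD.
- exact: is_diff_mull _ (is_diff_dsqdist a c v x).
- exact: is_diff_mulr _ (is_diff_dsqdist a c w x).
- exact: is_diff_mulr _ (is_diff_dsqdist a c u x).
Qed.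

Lemma bdd_mult_sqrt_psi_i_eq0 {r} {F g : V * V * V -> R} {t} :
  bdd_mult (W r) F (fun t => Num.sqrt (psii t.1.1) * g t) ->
  W r t -> psii t.1.1 = 0 -> F t = 0.
Proof.
move=> [C _ FC] Wt t0; apply/eqP; rewrite -normr_le0.
by rewrite (le_trans (FC t Wt)) // t0 sqrtr0 mul0r mulr0.
Qed.

Lemma Dpsi_i_eq0 {p} v : psii p = 0 -> Dpsi_i i p v = 0.
Proof.
move=> p0; have Wp : W 1 (p, v, v) by rewrite /with_dirs /= p0.
exact: (bdd_mult_sqrt_psi_i_eq0 (t := (p, v, v))
  (bdd_Dpsi_i ler01 (fun t => t.1.2)) Wp p0).
Qed.

Lemma DpsiB_eq0 {p} : psii p = 0 -> Dpsi p B = 0.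
Proof.
move=> p0; have Wp : W 1 (p, p, p) by rewrite /with_dirs /= p0.
apply: (bdd_mult_sqrt_psi_i_eq0 (F := fun t => Dpsi t.1.1 B) (g := fun=> 1)
  _ Wp p0).
by apply: eq_bdd_mult_bound (bdd_DpsiB ler01) => t _; rewrite mulr1.
Qed.

Lemma near_psi_i0_le1 {x} : psii x = 0 -> \forall y \near x, psii y <= 1.
Proof.
move=> x0; have := @cvgr_lt _ _ _ (nbhs_filter x) _ _ (continuous_psi_i x) 1.
by rewrite x0 => /(_ ltr01); apply: filterS => y /ltW.
Qed.

Lemma continuous_at_psi_i0 {F : V -> R} {C : R} {x} : psii x = 0 -> F x = 0 ->
  (forall y, psii y <= 1 -> `|F y| <= C * Num.sqrt (psii y)) ->
  {for x, continuous F}.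
Proof.
move=> x0 Fx0 FC.
apply: (continuous_dominated0 (g := fun y => Num.sqrt (psii y)) (M := C)).
- exact: continuous_comp (continuous_psi_i x) (@sqrt_continuous _ _).
- by rewrite /= x0 sqrtr0.
- exact: Fx0.
- move: (near_psi_i0_le1 x0); apply: filterS => y /FC.
  by rewrite (ger0_norm (sqrtr_ge0 _)).
Qed.

Lemma is_diff_at_psi_i0 {F : V -> R} {C : R} {x} : psii x = 0 -> F x = 0 ->
  (forall y, psii y <= 1 -> `|F y| <= C * psii y) -> is_diff x F (fun=> 0).
Proof.
move=> x0 Fx0 FC; apply: (is_diff_dominated0 (g := psii) (M := C) _ x0 Fx0).
- by apply: is_diff_ext (is_diff_psi_i i x) _ _ => // v; rewrite (Dpsi_i_eq0 v x0).
- move: (near_psi_i0_le1 x0); apply: filterS => y /FC.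
  by rewrite (ger0_norm (psi_i_ge0 _)).
Qed.

Section composition_with_h.
Variables (h : R -> R) (hh : h_hyp h).

Definition Xmpsi p := h (psii p) * Dpsi p B.
Definition DXmpsi p v :=
  derive1 h (psii p) * (Dpsi_i i p v * Dpsi p B) + h (psii p) * D2psi p B v.
Definition D2Xmpsi p v w :=
  derive1n 2 h (psii p) * (Dpsi_i i p w * (Dpsi_i i p v * Dpsi p B))
  + derive1 h (psii p) * (D2psi_i i p v w * Dpsi p B + Dpsi_i i p v * D2psi p B w)
  + (derive1 h (psii p) * Dpsi_i i p w * D2psi p B v + h (psii p) * D3psi p B v w).

Lemma bdd_h_psi_i r :
  bdd_mult (W r) (fun t => h (psii t.1.1)) (fun t => psii t.1.1).
Proof.
apply: (bdd_mult_comp (fun t : V * V * V => psii t.1.1) _ (h_hyp_bdd hh r)).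
by move=> t Wt; rewrite /= psi_i_ge0.
Qed.

Lemma bdd_dh_psi_i {r} {F g : V * V * V -> R} :
  bdd_mult (W r) F (fun t => Num.sqrt (psii t.1.1) * g t) ->
  bdd_mult (W r) (fun t => derive1 h (psii t.1.1) * F t)
    (fun t => Num.sqrt (psii t.1.1) * g t).
Proof.
move=> FC; have [C1 C10 h1C] := h_hyp_bdd1 hh r; have [C C0 FC'] := FC.
exists (C1 * C); first exact: mulr_ge0.
move=> t Wt; have [t0|t0] := eqVneq (psii t.1.1) 0.
  by rewrite (bdd_mult_sqrt_psi_i_eq0 FC Wt t0) mulr0 normr0 t0 sqrtr0 mul0r mulr0.
have t0' : 0 < psii t.1.1 by rewrite lt0r t0 psi_i_ge0.
rewrite normrM -mulrA ler_pM ?normr_ge0 ?FC' //.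
by rewrite -[C1]mulr1 h1C //= t0'.
Qed.

Lemma bdd_d2h_psi_i {r} {F g : V * V * V -> R} : (forall t, 0 <= g t) ->
  bdd_mult (W r) F (fun t => psii t.1.1 * g t) ->
  bdd_mult (W r) (fun t => derive1n 2 h (psii t.1.1) * F t) g.
Proof.
move=> g0 [C C0 FC]; have [C2 C20 h2C] := h_hyp_bdd2 hh r.
exists (C2 * C); first exact: mulr_ge0.
move=> t Wt; have [t0|t0] := eqVneq (psii t.1.1) 0.
  have : `|F t| <= 0 by rewrite (le_trans (FC t Wt)) // t0 mul0r mulr0.
  by rewrite normr_le0 => /eqP ->; rewrite mulr0 normr0 !mulr_ge0.
have t0' : 0 < psii t.1.1 by rewrite lt0r t0 psi_i_ge0.
have h2t : `|derive1n 2 h (psii t.1.1) * psii t.1.1| <= C2.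
  by rewrite -[C2]mulr1 h2C //= t0'.
rewrite normrM (le_trans (ler_wpM2l (normr_ge0 _) (FC t Wt))) //.
have -> : `|derive1n 2 h (psii t.1.1)| * (C * (psii t.1.1 * g t)) =
    C * (`|derive1n 2 h (psii t.1.1) * psii t.1.1| * g t).
  by rewrite normrM (gtr0_norm t0'); ring.
by rewrite [C2 * C]mulrC -mulrA ler_wpM2l // ler_wpM2r.
Qed.

Lemma bdd_Dh_psi_i {r} (dir : V * V * V -> V) : 0 <= r ->
  bdd_mult (W r) (fun t => derive1 h (psii t.1.1) * Dpsi_i i t.1.1 (dir t))
    (fun t => Num.sqrt (psii t.1.1) * `|dir t|).
Proof. by move=> r0; apply: bdd_dh_psi_i (bdd_Dpsi_i r0 dir). Qed.

Lemma bdd_dh_Dpsi_i_DpsiB {r} : 0 <= r ->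
  bdd_mult (W r)
    (fun t => derive1 h (psii t.1.1) * (Dpsi_i i t.1.1 t.1.2 * Dpsi t.1.1 B))
    (fun t => psii t.1.1 * `|t.1.2|).
Proof.
move=> r0; apply: (eq_bdd_mult_bound
  (g := fun t => Num.sqrt (psii t.1.1) * (Num.sqrt (psii t.1.1) * `|t.1.2|))).
  by move=> t _; rewrite mulrA -expr2 sqr_sqrtr ?psi_i_ge0.
apply: bdd_dh_psi_i; apply: eq_bdd_mult_bound
  (bdd_multM (bdd_Dpsi_i r0 (fun t => t.1.2)) (bdd_DpsiB r0)) => t _.
exact: mulrC.
Qed.

Lemma is_diff_h_psi_i p :
  is_diff p (fun q => h (psii q)) (fun v => derive1 h (psii p) * Dpsi_i i p v).
Proof.
have [p0|p0] := eqVneq (psii p) 0; last first.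
  have p_pos : 0 < psii p by rewrite lt0r p0 psi_i_ge0.
  exact: is_diff_comp_derivable (h_hyp_derivable hh _ p_pos) (is_diff_psi_i i p).
have [C _ hC] := bdd_h_psi_i 1.
have h_psi_i0 : is_diff p (fun q => h (psii q)) (fun=> 0).
  apply: (is_diff_at_psi_i0 (C := C) p0).
    by rewrite p0 (h_hyp_le0 hh _ (lexx 0)).
  by move=> y y1; exact: (hC (y, y, y)).
by apply: is_diff_ext h_psi_i0 _ _ => // v; rewrite Dpsi_i_eq0 // mulr0.
Qed.

Lemma is_diff_Xmpsi p : is_diff p Xmpsi (DXmpsi p).
Proof.
apply: is_diff_ext (is_diff_mul (is_diff_h_psi_i p) (is_diff_Dpsi B p)) _ _ => // v.
by rewrite /DXmpsi; ring.
Qed.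

Lemma is_diff_dh_Dpsi_i_DpsiB v p :
  is_diff p (fun q => derive1 h (psii q) * (Dpsi_i i q v * Dpsi q B))
    (fun w => derive1n 2 h (psii p) * (Dpsi_i i p w * (Dpsi_i i p v * Dpsi p B))
       + derive1 h (psii p) *
         (D2psi_i i p v w * Dpsi p B + Dpsi_i i p v * D2psi p B w)).
Proof.
have [p0|p0] := eqVneq (psii p) 0; last first.
  have p_pos : 0 < psii p by rewrite lt0r p0 psi_i_ge0.
  apply: is_diff_ext (is_diff_mul
    (is_diff_comp_derivable (h_hyp_derivable1 hh _ p_pos) (is_diff_psi_i i p))
    (is_diff_mul (is_diff_Dpsi_i i v p) (is_diff_Dpsi B p))) _ _ => // w.
  by rewrite /=; ring.
have [C _ TC] := bdd_dh_Dpsi_i_DpsiB ler01.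
have T0 : is_diff p (fun q => derive1 h (psii q) * (Dpsi_i i q v * Dpsi q B))
    (fun=> 0).
  apply: (is_diff_at_psi_i0 (C := C * `|v|) p0).
    by rewrite DpsiB_eq0 // !mulr0.
  move=> y y1; rewrite -[C * `|v| * _]mulrA [`|v| * _]mulrC.
  exact: (TC (y, v, v)).
by apply: is_diff_ext T0 _ _ => // w; rewrite !Dpsi_i_eq0 ?DpsiB_eq0 //=; ring.
Qed.

Lemma is_diff_DXmpsi v p : is_diff p (fun q => DXmpsi q v) (fun w => D2Xmpsi p v w).
Proof.
apply: is_diff_ext (is_diffD (is_diff_dh_Dpsi_i_DpsiB v p)
  (is_diff_mul (is_diff_h_psi_i p) (is_diff_D2psi B v p))) _ _ => // w.
by rewrite /D2Xmpsi addrfctE /=; ring.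
Qed.

Lemma diff_Xmpsi p v : 'd Xmpsi p v = DXmpsi p v.
Proof. by rewrite (diff_val (is_diff_def := is_diff_Xmpsi p)). Qed.

Lemma D2_Xmpsi p v w : D2 Xmpsi p v w = D2Xmpsi p v w.
Proof.
rewrite /D2 (_ : (fun y => 'd Xmpsi y v) = fun y => DXmpsi y v).
  by rewrite (diff_val (is_diff_def := is_diff_DXmpsi v p)).
by apply/funext => y; exact: diff_Xmpsi.
Qed.

Section Xmpsi_bounds.
Context {r : R} (r0 : 0 <= r).

Lemma bdd_Xmpsi :
  bdd_mult (W r) (fun t => Xmpsi t.1.1)
    (fun t => psii t.1.1 * Num.sqrt (psii t.1.1)).
Proof. exact: bdd_multM (bdd_h_psi_i r) (bdd_DpsiB r0). Qed.

Lemma bdd_DXmpsi :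
  bdd_mult (W r) (fun t => DXmpsi t.1.1 t.1.2) (fun t => psii t.1.1 * `|t.1.2|).
Proof.
apply: bdd_multD (bdd_dh_Dpsi_i_DpsiB r0) _.
exact: bdd_multM (bdd_h_psi_i r) (bdd_D2psiB r0 (fun t => t.1.2)).
Qed.

Lemma bdd_D2Xmpsi : bdd_mult (W r) (fun t => D2Xmpsi t.1.1 t.1.2 t.2)
  (fun t => Num.sqrt (psii t.1.1) * (`|t.1.2| * `|t.2|)).
Proof.
have sqrt2 t : Num.sqrt (psii t.1.1) * Num.sqrt (psii t.1.1) = psii t.1.1.
  by rewrite -expr2 sqr_sqrtr ?psi_i_ge0.
apply: bdd_multD; first apply: bdd_multD.
- apply: bdd_d2h_psi_i => [t|]; first by rewrite !mulr_ge0 ?sqrtr_ge0.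
  apply: eq_bdd_mult_bound (bdd_multM (bdd_Dpsi_i r0 (fun t => t.2))
    (bdd_multM (bdd_Dpsi_i r0 (fun t => t.1.2)) (bdd_DpsiB r0))) => t _.
  by rewrite -[X in X * (Num.sqrt _ * _)]sqrt2; ring.
- apply: bdd_dh_psi_i; apply: bdd_multD.
    apply: eq_bdd_mult_bound
      (bdd_multM (bdd_D2psi_i r0 (fun t => t.1.2) (fun t => t.2))
      (bdd_DpsiB r0)) => t _.
    exact: mulrC.
  apply: eq_bdd_mult_bound (bdd_multM (bdd_Dpsi_i r0 (fun t => t.1.2))
    (bdd_D2psiB r0 (fun t => t.2))) => t _.
  by rewrite mulrA.
- apply: bdd_multD.
    apply: eq_bdd_mult_bound (bdd_multM (bdd_Dh_psi_i (fun t => t.2) r0)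
      (bdd_D2psiB r0 (fun t => t.1.2))) => t _.
    by ring.
  apply: bdd_mult_trans (bdd_multM (bdd_h_psi_i r)
    (bdd_D3psiB r0 (fun t => t.1.2) (fun t => t.2))).
    exact: (addr_ge0 ler01 r0).
  move=> t Wt /=; rewrite [(1 + r) * _]mulrA ler_wpM2r ?mulr_ge0 //.
  rewrite -[X in X <= _]sqrt2.
  by rewrite ler_wpM2r ?sqrtr_ge0 ?sqrt_psi_i_le.
Qed.

End Xmpsi_bounds.

Lemma continuous_comp_psi_i {k : R -> R} {p} :
  (forall y, 0 < y -> {for y, continuous k}) -> psii p != 0 ->
  {for p, continuous (fun q => k (psii q))}.
Proof.
move=> kc p0; apply: continuous_comp (continuous_psi_i p) (kc _ _).
by rewrite lt0r p0 psi_i_ge0.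
Qed.

Lemma C1_h_psi_i : C1 (h \o psii).
Proof.
split=> [p|v]; first exact: (ex_diff (is_diff_def := is_diff_h_psi_i p)).
rewrite (_ : (fun x => 'd (h \o psii) x v) =
             fun x => derive1 h (psii x) * Dpsi_i i x v); last first.
  by apply/funext => x; rewrite (diff_val (is_diff_def := is_diff_h_psi_i x)).
move=> p; have [p0|p0] := eqVneq (psii p) 0.
  have [C _ hC] := bdd_Dh_psi_i (fun t => t.1.2) ler01.
  apply: (continuous_at_psi_i0 (C := C * `|v|) p0).
    by rewrite Dpsi_i_eq0 ?mulr0.
  move=> y y1; rewrite -[C * `|v| * _]mulrA [`|v| * _]mulrC.
  exact: (hC (y, v, v)).
exact: continuous_atM (continuous_comp_psi_i (h_hyp_continuous1 hh) p0)
  (continuous_Dpsi_i v p).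
Qed.

Lemma C2_Xmpsi : C2 Xmpsi.
Proof.
split; [|split].
- by move=> p; exact: (ex_diff (is_diff_def := is_diff_Xmpsi p)).
- move=> v p; rewrite (_ : (fun y => 'd Xmpsi y v) = fun y => DXmpsi y v).
    exact: (ex_diff (is_diff_def := is_diff_DXmpsi v p)).
  by apply/funext => y; exact: diff_Xmpsi.
move=> v w.
rewrite (_ : (fun x => D2 Xmpsi x v w) = fun x => D2Xmpsi x v w); last first.
  by apply/funext => x; exact: D2_Xmpsi.
move=> p; have [p0|p0] := eqVneq (psii p) 0.
  have [C _ XC] := bdd_D2Xmpsi ler01.
  apply: (continuous_at_psi_i0 (C := C * (`|v| * `|w|)) p0).
    rewrite /D2Xmpsi !Dpsi_i_eq0 ?DpsiB_eq0 // p0 (h_hyp_le0 hh _ (lexx 0)).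
    by ring.
  move=> y y1; rewrite -[C * _ * _]mulrA [_ * Num.sqrt _]mulrC.
  exact: (XC (y, v, w)).
have ch := continuous_comp_psi_i (h_hyp_continuous hh) p0.
have ch1 := continuous_comp_psi_i (h_hyp_continuous1 hh) p0.
have ch2 := continuous_comp_psi_i (h_hyp_continuous2 hh) p0.
have cDv := continuous_Dpsi_i v p; have cDw := continuous_Dpsi_i w p.
have cG := continuous_Dpsi B p; have cD2 := continuous_D2psi_i i v w p.
have cD2v := continuous_D2psi B v p; have cD2w := continuous_D2psi B w p.
exact: continuous_atD (continuous_atD
    (continuous_atM ch2 (continuous_atM cDw (continuous_atM cDv cG)))
    (continuous_atM ch1
      (continuous_atD (continuous_atM cD2 cG) (continuous_atM cDv cD2w))))
  (continuous_atD (continuous_atM (continuous_atM ch1 cDw) cD2v)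
    (continuous_atM ch (continuous_D3psi B v w p))).
Qed.

Section sublevel_set_bounds.
Context {r : R} (r_gt0 : 0 < r).
Local Notation Wp := [set p : V | psii p <= r].

Lemma h_psi_i_bdd : fun_bdd_mult (h \o psii) psii Wp.
Proof. by apply: fun_bdd_mult_with_dirs psi_i_ge0 _; exact: bdd_h_psi_i. Qed.

Lemma diff_h_psi_i_bdd : diff_bdd_mult (h \o psii) (fun p => psii p `^ 2^-1) Wp.
Proof.
apply: (diff_bdd_mult_with_dirs
  (Df := fun p v => derive1 h (psii p) * Dpsi_i i p v)).
- by move=> p; rewrite powR_ge0.
- by move=> p v; rewrite (diff_val (is_diff_def := is_diff_h_psi_i p)).
- apply: eq_bdd_mult_bound (bdd_Dh_psi_i (fun t => t.1.2) (ltW r_gt0)) => t _.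
  by rewrite powR12_sqrt ?psi_i_ge0.
Qed.

Lemma Xmpsi_bdd : fun_bdd_mult Xmpsi (fun p => psii p `^ (3 / 2)) Wp.
Proof.
apply: fun_bdd_mult_with_dirs => [p|]; first by rewrite powR_ge0.
apply: eq_bdd_mult_bound (bdd_Xmpsi (ltW r_gt0)) => t _.
by rewrite powR32_sqrt ?psi_i_ge0.
Qed.

Lemma diff_Xmpsi_bdd : diff_bdd_mult Xmpsi psii Wp.
Proof.
apply: diff_bdd_mult_with_dirs psi_i_ge0 diff_Xmpsi _.
exact: bdd_DXmpsi (ltW r_gt0).
Qed.

Lemma D2_Xmpsi_bdd : D2_bdd_mult Xmpsi (fun p => psii p `^ 2^-1) Wp.
Proof.
apply: D2_bdd_mult_with_dirs => [p||]; first by rewrite powR_ge0.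
  exact: D2_Xmpsi.
apply: eq_bdd_mult_bound (bdd_D2Xmpsi (ltW r_gt0)) => t _.
by rewrite powR12_sqrt ?psi_i_ge0.
Qed.

End sublevel_set_bounds.

End composition_with_h.

End configuration.

Theorem lemma5p1 (R : realType) (N n : nat)
  (E : rel 'I_N) (d : 'I_N -> 'I_N -> R)
  (b : 'I_N -> 'I_n -> 'rV[R]_n) (h1 h2 : R -> R)
  (HEsym : symmetric E) (HEirr : irreflexive E)
  (HEne : exists i j, E i j)
  (Hdsym : forall i j, d i j = d j i)
  (Hdge0 : forall i j, E i j -> 0 <= d i j)
  (Hb : forall i k k', \sum_(l < n) b i k 0 l * b i k' 0 l = (k == k')%:R)
  (Hh1 : h_hyp h1) (Hh2 : h_hyp h2) (Hh12 : h_hyp6 h1 h2)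
  (i : 'I_N) (k : 'I_n) (nu : 'I_2) (r : R) (Hr : 0 < r) :
  let h := if nu == ord0 then h1 else h2 in
  let psii := psi_i E d i in
  let W := [set p : 'M[R]_(N, n) | psii p <= r] in
  let Xm := Xpsi E d h i (b i k) in
  (C1 (h \o psii) /\
   fun_bdd_mult (h \o psii) psii W /\
   diff_bdd_mult (h \o psii) (fun p => psii p `^ 2^-1) W) /\
  (C2 Xm /\
   fun_bdd_mult Xm (fun p => psii p `^ (3 / 2)) W /\
   diff_bdd_mult Xm psii W /\
   D2_bdd_mult Xm (fun p => psii p `^ 2^-1) W).
Proof.
move=> h psii W Xm.
have hh : h_hyp h by rewrite /h; case: (nu == ord0).
pose B := Bfield i (b i k).
have B_supp a l : a != i -> B a l = 0 by move=> ai; rewrite mxE (negbTE ai).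
have -> : Xm = Xmpsi R N n E d i B h.
  apply/funext => p; rewrite /Xm /Xpsi linearZ /=.
  by rewrite (diff_val (is_diff_def := is_diff_psi _ _ _ _ _ p)).
split; split; first exact: C1_h_psi_i.
- by split; [exact: h_psi_i_bdd | exact: diff_h_psi_i_bdd].
- exact: C2_Xmpsi.
- split; first exact: Xmpsi_bdd.
  by split; [exact: diff_Xmpsi_bdd | exact: D2_Xmpsi_bdd].
Qed.
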